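(* For every complete lattice $L$, $$\dim_{\nabla}(L)=\min\{\mathrm{cov}(A): A\text{ is meet-dense in } L\}.$$
   Context: A subset $A$ of a complete lattice $L$ is meet-dense if every element of $L$ is the meet (possibly infinite) of a subset of $A$. The complete join-dimension $\dim_\nabla(L)$ is the least cardinal $\kappa$ such that there is a one-to-one map from $L$ into a direct product of $\kappa$ complete chains preserving arbitrary joins. The chain-covering number $\mathrm{cov}(P)$ of a poset $P$ is the least cardinal $\kappa$ such that $P$ is a union of $\kappa$ chains. *)

Set Universe Polymorphism.

Definition is_lub {T : Type} (le : T -> T -> Prop) (S : T -> Prop) (x : T) : Prop :=
  (forall y, S y -> le y x) /\ (forall z, (forall y, S y -> le y z) -> le x z).

Definition is_glb {T : Type} (le : T -> T -> Prop) (S : T -> Prop) (x : T) : Prop :=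
  (forall y, S y -> le x y) /\ (forall z, (forall y, S y -> le z y) -> le z x).

(** A complete lattice: a partial order in which every subset has a join
    (hence also a meet). [cl_sup S] is the join of [S]. *)
Record CompleteLattice := {
  cl_car :> Type;
  cl_le : cl_car -> cl_car -> Prop;
  cl_refl : forall x, cl_le x x;
  cl_antisym : forall x y, cl_le x y -> cl_le y x -> x = y;
  cl_trans : forall x y z, cl_le x y -> cl_le y z -> cl_le x z;
  cl_sup : (cl_car -> Prop) -> cl_car;
  cl_sup_lub : forall S, is_lub cl_le S (cl_sup S)
}.

Definition is_chain_lattice (C : CompleteLattice) : Prop :=
  forall x y : C, cl_le C x y \/ cl_le C y x.

Definition image {A B : Type} (f : A -> B) (S : A -> Prop) : B -> Prop :=
  fun b => exists a, S a /\ f a = b.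

(** [L] admits a one-to-one, arbitrary-join-preserving map into the direct
    product of a family of complete chains indexed by [I] (joins in the
    product are computed coordinatewise). *)
Definition join_embeds_in_chains (L : CompleteLattice) (I : Type) : Prop :=
  exists (C : I -> CompleteLattice) (f : L -> forall i, C i),
    (forall i, is_chain_lattice (C i)) /\
    (forall x y, f x = f y -> x = y) /\
    (forall (S : L -> Prop) (i : I),
        f (cl_sup L S) i = cl_sup (C i) (image (fun x => f x i) S)).

Definition meet_dense (L : CompleteLattice) (A : L -> Prop) : Prop :=
  forall x : L, exists B : L -> Prop,
    (forall b, B b -> A b) /\ is_glb (cl_le L) B x.

Definition is_chain (L : CompleteLattice) (c : L -> Prop) : Prop :=
  forall x y, c x -> c y -> cl_le L x y \/ cl_le L y x.

Definition covered_by_chains (L : CompleteLattice) (A : L -> Prop) (I : Type) : Prop :=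
  exists c : I -> L -> Prop,
    (forall i, is_chain L (c i)) /\
    (forall x, A x <-> exists i, c i x).

(** Cardinals are represented by index types; |I| <= |J| iff there is an
    injection I -> J. [is_least_card P I] : the cardinal of [I] is the least
    cardinal with property [P]. *)
Definition card_le (I J : Type) : Prop :=
  exists f : I -> J, forall a b, f a = f b -> a = b.

Definition is_least_card (P : Type -> Prop) (I : Type) : Prop :=
  P I /\ forall J : Type, P J -> card_le I J.

Definition is_join_dim (L : CompleteLattice) (I : Type) : Prop :=
  is_least_card (join_embeds_in_chains L) I.

Definition is_min_cov_meet_dense (L : CompleteLattice) (I : Type) : Prop :=
  is_least_card (fun J => exists A, meet_dense L A /\ covered_by_chains L A J) I.

(* A meet-dense set A covered by chains (c_j) gives the join-embedding
   x |-> ({a in c_j | x is not below a})_j into the complete chains of downsets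
   of the c_j; it is injective because A is meet-dense.  Conversely, a
   join-embedding f into chains C_i has upper adjoints g_i t = sup {x | f x i <= t},
   whose ranges are chains (g_i is monotone) and together form a meet-dense set,
   since x is the meet of the g_i (f x i).  So the two families of cardinals
   coincide, and it remains to see that they have a least element: every cover
   can be reindexed by a subset of L of no larger cardinality, and among the
   subsets of L there is one of least cardinality (a maximal family of
   coordinatewise disjoint transversals, found by Zorn's lemma, exhausts one of
   them). *)

From Stdlib Require Import Classical ClassicalEpsilon FunctionalExtensionality
  PropExtensionality ProofIrrelevance.
From mathcomp Require classical_sets.

Lemma proj1_sig_inj (T : Type) (P : T -> Prop) (u v : {x | P x}) :
  proj1_sig u = proj1_sig v -> u = v.
Proof. apply eq_sig_hprop. intros x; apply proof_irrelevance. Qed.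

Lemma card_le_trans (A B C : Type) : card_le A B -> card_le B C -> card_le A C.
Proof.
  intros [f Hf] [g Hg]. exists (fun a => g (f a)). intros a b E. apply Hf, Hg, E.
Qed.

Section CompleteLatticeFacts.

Variable L : CompleteLattice.

Lemma le_sup (S : L -> Prop) (y : L) : S y -> cl_le L y (cl_sup L S).
Proof. exact (proj1 (cl_sup_lub L S) y). Qed.

Lemma sup_le (S : L -> Prop) (z : L) :
  (forall y, S y -> cl_le L y z) -> cl_le L (cl_sup L S) z.
Proof. exact (proj2 (cl_sup_lub L S) z). Qed.

Lemma sup_pair_le (x y : L) :
  cl_le L x y -> cl_sup L (fun z => z = x \/ z = y) = y.
Proof.
  intros Hxy. apply (cl_antisym L).
  - apply sup_le. intros z [-> | ->]; [exact Hxy | apply cl_refl].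
  - apply le_sup. now right.
Qed.

Lemma meet_dense_le (A : L -> Prop) (x y : L) : meet_dense L A ->
  (forall a, A a -> cl_le L x a -> cl_le L y a) -> cl_le L y x.
Proof.
  intros Hmd H. destruct (Hmd x) as [B [HBA [Hlb Hglb]]].
  apply Hglb. intros b Hb. apply H; [exact (HBA b Hb) | exact (Hlb b Hb)].
Qed.

Lemma meet_dense_full_cover :
  exists A, meet_dense L A /\ covered_by_chains L A {x : L | True}.
Proof.
  exists (fun _ => True). split.
  - intro x. exists (fun y => y = x). split; [intros; exact I | split].
    + intros y ->. apply cl_refl.
    + intros z Hz. now apply Hz.
  - exists (fun s y => y = proj1_sig s). split.
    + intros s a b -> ->. left. apply cl_refl.
    + intro x. split; [|intros _; exact I]. intros _. exists (exist _ x I). reflexivity.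
Qed.

End CompleteLatticeFacts.

Section DownsetChain.

Variables (L : CompleteLattice) (c : L -> Prop).

Definition downset_in (D : L -> Prop) : Prop :=
  (forall a, D a -> c a) /\ (forall a b, D a -> c b -> cl_le L b a -> D b).

Definition downset := {D : L -> Prop | downset_in D}.

Lemma downset_ext (D1 D2 : downset) :
  (forall a, proj1_sig D1 a <-> proj1_sig D2 a) -> D1 = D2.
Proof.
  intros H. apply proj1_sig_inj. apply functional_extensionality. intro a.
  apply propositional_extensionality, H.
Qed.

Definition downset_sup (S : downset -> Prop) : downset.
Proof.
  refine (exist _ (fun a => exists D, S D /\ proj1_sig D a) _). split.
  - intros a [D [_ HD]]. exact (proj1 (proj2_sig D) a HD).
  - intros a b [D [HS HD]] Hb Hba. exists D. split; [exact HS|].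
    exact (proj2 (proj2_sig D) a b HD Hb Hba).
Defined.

Definition downset_lattice : CompleteLattice.
Proof.
  refine {| cl_car := downset;
            cl_le := fun D1 D2 => forall a, proj1_sig D1 a -> proj1_sig D2 a;
            cl_sup := downset_sup |}.
  - auto.
  - intros; apply downset_ext; split; auto.
  - auto.
  - intros S; split.
    + intros D HD a Ha. now exists D.
    + intros E HE a [D [HD Ha]]. exact (HE D HD a Ha).
Defined.

Lemma downset_lattice_chain : is_chain L c -> is_chain_lattice downset_lattice.
Proof.
  intros Hc D1 D2. simpl.
  destruct (classic (forall a, proj1_sig D1 a -> proj1_sig D2 a)) as [H | H];
    [now left | right].
  apply not_all_ex_not in H. destruct H as [a Ha].
  apply imply_to_and in Ha. destruct Ha as [Ha1 Ha2].
  destruct (proj2_sig D1) as [D1c D1down], (proj2_sig D2) as [D2c D2down].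
  intros b Hb. destruct (Hc a b (D1c a Ha1) (D2c b Hb)) as [Hab | Hba].
  - exfalso. exact (Ha2 (D2down b a Hb (D1c a Ha1) Hab)).
  - exact (D1down a b Ha1 (D2c b Hb) Hba).
Qed.

Definition not_above (x : L) : downset.
Proof.
  refine (exist _ (fun a => c a /\ ~ cl_le L x a) _). split.
  - now intros a [Ha _].
  - intros a b [_ Hxa] Hb Hba. split; [exact Hb|]. intro Hxb.
    exact (Hxa (cl_trans L _ _ _ Hxb Hba)).
Defined.

Lemma not_above_sup (S : L -> Prop) :
  not_above (cl_sup L S) = cl_sup downset_lattice (image not_above S).
Proof.
  apply downset_ext. intro a. simpl. split.
  - intros [Ha Hna].
    assert (Hs : exists s, S s /\ ~ cl_le L s a).
    { apply NNPP. intro H. apply Hna, sup_le. intros s Hs.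
      apply NNPP. intro Hsa. apply H. now exists s. }
    destruct Hs as [s [Hs Hsa]]. exists (not_above s). split.
    + now exists s.
    + now split.
  - intros [D [[s [Hs <-]] [Ha Hsa]]]. split; [exact Ha|]. intro H.
    exact (Hsa (cl_trans L _ _ _ (le_sup L S s Hs) H)).
Qed.

End DownsetChain.

Lemma join_embeds_of_meet_dense_cover (L : CompleteLattice) (J : Type) (A : L -> Prop) :
  meet_dense L A -> covered_by_chains L A J -> join_embeds_in_chains L J.
Proof.
  intros Hmd [c [Hch Hcov]].
  exists (fun j => downset_lattice L (c j)), (fun x j => not_above L (c j) x).
  split; [intro j; exact (downset_lattice_chain L (c j) (Hch j)) | split].
  - intros x y Exy.
    assert (Hsame : forall a, A a -> (cl_le L x a <-> cl_le L y a)).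
    { intros a Ha. destruct (proj1 (Hcov a) Ha) as [j Hj].
      pose proof (f_equal (fun D => proj1_sig D a) (equal_f_dep Exy j)) as E.
      simpl in E. split; intro H; apply NNPP; intro H'.
      - assert (P : c j a /\ ~ cl_le L y a) by easy. rewrite <- E in P. tauto.
      - assert (P : c j a /\ ~ cl_le L x a) by easy. rewrite E in P. tauto. }
    apply (cl_antisym L); apply (meet_dense_le L A _ _ Hmd);
      intros a Ha; apply Hsame; exact Ha.
  - intros S j. apply not_above_sup.
Qed.

Section UpperAdjoints.

Variables (L : CompleteLattice) (I : Type) (C : I -> CompleteLattice)
  (f : L -> forall i, C i).
Hypothesis f_inj : forall x y, f x = f y -> x = y.
Hypothesis f_sup : forall (S : L -> Prop) (i : I),
  f (cl_sup L S) i = cl_sup (C i) (image (fun x => f x i) S).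

Lemma join_embedding_mono (x y : L) (i : I) :
  cl_le L x y -> cl_le (C i) (f x i) (f y i).
Proof.
  intros Hxy. rewrite <- (sup_pair_le L x y Hxy), f_sup.
  apply le_sup. exists x. split; [now left | reflexivity].
Qed.

Definition upper_adjoint (i : I) (t : C i) : L :=
  cl_sup L (fun x => cl_le (C i) (f x i) t).

Lemma upper_adjoint_counit (i : I) (t : C i) : cl_le (C i) (f (upper_adjoint i t) i) t.
Proof.
  unfold upper_adjoint. rewrite f_sup. apply sup_le. now intros u [x [Hx <-]].
Qed.

Lemma upper_adjoint_mono (i : I) (t t' : C i) :
  cl_le (C i) t t' -> cl_le L (upper_adjoint i t) (upper_adjoint i t').
Proof.
  intros Htt'. apply sup_le. intros x Hx. apply le_sup.
  exact (cl_trans (C i) _ _ _ Hx Htt').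
Qed.

Definition upper_adjoint_range (z : L) : Prop := exists i t, upper_adjoint i t = z.

Lemma upper_adjoint_range_meet_dense : meet_dense L upper_adjoint_range.
Proof.
  intros x. exists (fun z => exists i, z = upper_adjoint i (f x i)). split.
  - intros b [i ->]. now exists i, (f x i).
  - split.
    + intros y [i ->]. apply le_sup, cl_refl.
    + intros z Hz.
      assert (Hzx : forall i, cl_le (C i) (f z i) (f x i)).
      { intro i. eapply cl_trans.
        - apply join_embedding_mono, Hz. now exists i.
        - apply upper_adjoint_counit. }
      assert (Hjoin : f (cl_sup L (fun y => y = z \/ y = x)) = f x).
      { apply functional_extensionality_dep. intro i. rewrite f_sup.
        apply cl_antisym.
        - apply sup_le. intros u [y [[-> | ->] <-]]; [apply Hzx | apply cl_refl].
        - apply le_sup. exists x. split; [now right | reflexivity]. }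
      rewrite <- (f_inj _ _ Hjoin). apply le_sup. now left.
Qed.

Lemma upper_adjoint_range_cover :
  (forall i, is_chain_lattice (C i)) -> covered_by_chains L upper_adjoint_range I.
Proof.
  intros Hch. exists (fun i z => exists t, upper_adjoint i t = z). split.
  - intros i a b [t <-] [t' <-].
    destruct (Hch i t t'); [left | right]; now apply upper_adjoint_mono.
  - intro x. apply iff_refl.
Qed.

End UpperAdjoints.

Lemma meet_dense_cover_of_join_embeds (L : CompleteLattice) (J : Type) :
  join_embeds_in_chains L J -> exists A, meet_dense L A /\ covered_by_chains L A J.
Proof.
  intros [C [f [Hch [Hinj Hsup]]]].
  exists (upper_adjoint_range L J C f). split.
  - exact (upper_adjoint_range_meet_dense L J C f Hinj Hsup).
  - exact (upper_adjoint_range_cover L J C f Hch).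
Qed.

Section Reindexing.

Variables (T J : Type) (A : T -> Prop).

Lemma disjoint_refinement (c : J -> T -> Prop) :
  (forall x, A x <-> exists j, c j x) ->
  exists d : J -> T -> Prop,
    (forall j x, d j x -> c j x) /\
    (forall x, A x <-> exists j, d j x) /\
    (forall j k x, d j x -> d k x -> j = k).
Proof.
  intros Hcov.
  assert (Hidx : forall a : {x | A x}, exists j, c j (proj1_sig a)).
  { intro a. apply Hcov, proj2_sig. }
  destruct (choice _ Hidx) as [idx Hc].
  exists (fun j x => exists Hx : A x, idx (exist _ x Hx) = j). split; [|split].
  - intros j x [Hx <-]. exact (Hc (exist _ x Hx)).
  - intro x. split.
    + intro Hx. now exists (idx (exist _ x Hx)), Hx.
    + now intros [j [Hx _]].
  - intros j k x [Hx <-] [Hx' <-]. now rewrite (proof_irrelevance _ Hx Hx').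
Qed.

Lemma disjoint_cover_subset_index (d : J -> T -> Prop) : inhabited T ->
  (forall x, A x <-> exists j, d j x) ->
  (forall j k x, d j x -> d k x -> j = k) ->
  exists (S : T -> Prop) (h : {x | S x} -> J),
    (forall s s', h s = h s' -> s = s') /\
    (forall x, A x <-> exists s, d (h s) x).
Proof.
  intros inhT Hcov Hdisj.
  pose (rep j := epsilon inhT (d j)).
  pose (S x := exists j, d j x /\ rep j = x).
  assert (Hh : forall s : {x | S x}, {j | d j (proj1_sig s) /\ rep j = proj1_sig s}).
  { intro s. apply constructive_indefinite_description, proj2_sig. }
  exists S, (fun s => proj1_sig (Hh s)). split.
  - intros s s' E. apply proj1_sig_inj.
    destruct (proj2_sig (Hh s)) as [_ <-], (proj2_sig (Hh s')) as [_ <-].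
    now rewrite E.
  - intro x. split.
    + intro Hx. destruct (proj1 (Hcov x) Hx) as [j Hj].
      assert (Hrep : d j (rep j)) by (apply epsilon_spec; now exists x).
      set (s := exist S (rep j) (ex_intro _ j (conj Hrep eq_refl))).
      exists s. destruct (proj2_sig (Hh s)) as [Hd _].
      now rewrite <- (Hdisj _ _ _ Hrep Hd).
    + intros [s Hs]. apply Hcov. eauto.
Qed.

End Reindexing.

Lemma covered_by_chains_subset_index (L : CompleteLattice) (A : L -> Prop) (J : Type) :
  covered_by_chains L A J ->
  exists S : L -> Prop, covered_by_chains L A {x | S x} /\ card_le {x | S x} J.
Proof.
  intros [c [Hch Hcov]].
  destruct (disjoint_refinement L J A c Hcov) as [d [Hdc [Hdcov Hdisj]]].
  destruct (disjoint_cover_subset_index L J A d (inhabits (cl_sup L (fun _ => False)))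
              Hdcov Hdisj) as [S [h [Hinj Hhcov]]].
  exists S. split.
  - exists (fun s => d (h s)). split; [|exact Hhcov].
    intros s a b Ha Hb. exact (Hch (h s) a b (Hdc _ _ Ha) (Hdc _ _ Hb)).
  - now exists h.
Qed.

Section LeastSubset.

Variables (X : Type) (K : (X -> Prop) -> Prop).

Let member := {S : X -> Prop | K S}.

Definition transversal (t : member -> X) : Prop := forall k, proj1_sig k (t k).

Definition disjoint_transversals (M : (member -> X) -> Prop) : Prop :=
  (forall t, M t -> transversal t) /\
  (forall t t' k, M t -> M t' -> t k = t' k -> t = t').

Lemma maximal_disjoint_transversals :
  exists M, disjoint_transversals M /\
    forall M', classical_sets.proper M M' -> ~ disjoint_transversals M'.
Proof.
  apply classical_sets.Zorn_bigcup. intros F HF Htot. split.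
  - intros t [Y HY Ht]. exact (proj1 (HF Y HY) t Ht).
  - intros t t' k [Y HY Ht] [Y' HY' Ht'] E.
    destruct (Htot Y Y' HY HY') as [H | H].
    + exact (proj2 (HF Y' HY') t t' k (H t Ht) Ht' E).
    + exact (proj2 (HF Y HY) t t' k Ht (H t' Ht') E).
Qed.

Lemma maximal_disjoint_transversals_exhaust (M : (member -> X) -> Prop) :
  inhabited member -> disjoint_transversals M ->
  (forall M', classical_sets.proper M M' -> ~ disjoint_transversals M') ->
  exists k0 : member, forall x, proj1_sig k0 x -> exists t, M t /\ t k0 = x.
Proof.
  intros [k1] HM Hmax. apply NNPP. intro Hn.
  assert (Hfree : forall k : member, exists x, proj1_sig k x /\ forall t, M t -> t k <> x).
  { intro k. apply NNPP. intro H. apply Hn. exists k. intros x Hx.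
    apply NNPP. intro H'. apply H. exists x. split; [exact Hx|].
    intros t Mt E. apply H'. now exists t. }
  destruct (choice _ Hfree) as [t0 Ht0].
  apply (Hmax (fun t => M t \/ t = t0)).
  - split.
    + intros t Mt. now left.
    + intro Hsub. exact (proj2 (Ht0 k1) t0 (Hsub t0 (or_intror eq_refl)) eq_refl).
  - split.
    + intros t [Mt | ->]; [exact (proj1 HM t Mt) | intro k; exact (proj1 (Ht0 k))].
    + intros t t' k [Mt | ->] [Mt' | ->] E.
      * exact (proj2 HM t t' k Mt Mt' E).
      * exfalso. exact (proj2 (Ht0 k) t Mt E).
      * exfalso. exact (proj2 (Ht0 k) t' Mt' (eq_sym E)).
      * reflexivity.
Qed.

Lemma exhausted_card_le (M : (member -> X) -> Prop) (k0 : member) :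
  disjoint_transversals M ->
  (forall x, proj1_sig k0 x -> exists t, M t /\ t k0 = x) ->
  forall S, K S -> card_le {x | proj1_sig k0 x} {x | S x}.
Proof.
  intros HM Hk0 S HS. pose (k := exist _ S HS : member).
  assert (Hsel : forall x : {x | proj1_sig k0 x}, {t | M t /\ t k0 = proj1_sig x}).
  { intro x. apply constructive_indefinite_description, Hk0, proj2_sig. }
  exists (fun x => exist S (proj1_sig (Hsel x) k)
                     (proj1 HM _ (proj1 (proj2_sig (Hsel x))) k)).
  intros x1 x2 E. apply (f_equal (@proj1_sig _ _)) in E. simpl in E.
  pose proof (proj2_sig (Hsel x1)) as [M1 E1].
  pose proof (proj2_sig (Hsel x2)) as [M2 E2].
  apply proj1_sig_inj. rewrite <- E1, <- E2, (proj2 HM _ _ k M1 M2 E). reflexivity.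
Qed.

Lemma exists_card_least_subset (S1 : X -> Prop) : K S1 ->
  exists S0, K S0 /\ forall S, K S -> card_le {x | S0 x} {x | S x}.
Proof.
  intros HS1.
  destruct maximal_disjoint_transversals as [M [HM Hmax]].
  destruct (maximal_disjoint_transversals_exhaust M (inhabits (exist _ S1 HS1)) HM Hmax)
    as [k0 Hk0].
  exists (proj1_sig k0). split; [exact (proj2_sig k0)|].
  exact (exhausted_card_le M k0 HM Hk0).
Qed.

End LeastSubset.

Theorem theorem7p4 (L : CompleteLattice) :
  exists I : Type, is_join_dim L I /\ is_min_cov_meet_dense L I.
Proof.
  pose (K S := exists A, meet_dense L A /\ covered_by_chains L A {x : L | S x}).
  destruct (exists_card_least_subset L K (fun _ => True) (meet_dense_full_cover L))
    as [S0 [[A0 [Hmd0 Hcov0]] Hleast]].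
  assert (Hbound : forall J, (exists A, meet_dense L A /\ covered_by_chains L A J) ->
                             card_le {x | S0 x} J).
  { intros J [A [Hmd Hcov]].
    destruct (covered_by_chains_subset_index L A J Hcov) as [S [HcovS HSJ]].
    apply (card_le_trans _ {x | S x}); [apply Hleast; now exists A | exact HSJ]. }
  exists {x | S0 x}. split; split.
  - exact (join_embeds_of_meet_dense_cover L _ A0 Hmd0 Hcov0).
  - intros J HJ. apply Hbound, meet_dense_cover_of_join_embeds, HJ.
  - now exists A0.
  - exact Hbound.
Qed.
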